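(* Let $n,t,k$ be integers with $n\geq 2t\geq 2$ and $k\geq 2$. Then \[C_k(n,t)\leq k^t A_k(n-2t,0^t),\] where $0^t$ denotes the word consisting of $t$ zeros.
   Context: Words are over $\Sigma_k=\{0,1,\ldots,k-1\}$. A border of a word $w$ is a non-empty word that is both a proper prefix and a proper suffix of $w$. A word $w$ is closed by a word $u$ if $u$ is a border of $w$ and $u$ occurs exactly twice in $w$ as a factor (overlapping occurrences counted). $C_k(n,t)$ denotes the number of words of length $n$ over $\Sigma_k$ that are closed by some word of length $t$. $A_k(m,v)$ denotes the number of words of length $m$ over $\Sigma_k$ that do not contain $v$ as a factor (for $m=0$ the empty word is counted). *)

From mathcomp Require Import all_boot.
Set Implicit Arguments. Unset Strict Implicit. Unset Printing Implicit Defensive.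

(* Words over Sigma_k = {0,...,k-1}: a word of length n is an n.-tuple of 'I_k;
   combinatorial predicates are stated on the underlying letter sequence
   (map val w : seq nat). *)

Definition occ (u w : seq nat) : nat :=
  count (fun i => take (size u) (drop i w) == u) (iota 0 (size w - size u).+1).

Definition is_border (u w : seq nat) : bool :=
  [&& 0 < size u, size u < size w,
      take (size u) w == u & drop (size w - size u) w == u].

Definition closed_by (u w : seq nat) : bool := is_border u w && (occ u w == 2).

(* C_k(n,t): words of length n over Sigma_k closed by some word of length t
   (the closing word is necessarily over Sigma_k, being a factor of w) *)
Definition Ck (k n t : nat) : nat :=
  #|[set w : n.-tuple 'I_k |
      [exists u : t.-tuple 'I_k, closed_by (map val u) (map val w)]]|.

Definition Ak (k m : nat) (v : seq nat) : nat :=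
  #|[set w : m.-tuple 'I_k | occ v (map val w) == 0]|.

From mathcomp Require Import all_boot perm zify.

(* A word closed by a word u of length t is u m u where u is not a factor of m,
   since a third occurrence of u would appear otherwise.  Encode m with a
   transducer driven by u whose state r is the length of the current match of m
   against a prefix of u: a letter equal to u_r is written as 0 and advances the
   state, any other letter a is written as its image under the transposition
   (u_r 0) and resets the state.  The code is injective, and a run of t zeros in
   it can only come from t consecutive matches, i.e. from an occurrence of u in m.
   Hence w |-> (u, code of m) injects the words closed by a word of length t into
   pairs of a word of length t and a word of length n - 2t avoiding 0^t. *)

Set Implicit Arguments.
Unset Strict Implicit.
Unset Printing Implicit Defensive.

Lemma occ_nil (v : seq nat) : occ v [::] = (v == [::]).
Proof. by rewrite /occ /= addn0 eq_sym. Qed.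

Lemma occ_cons (v : seq nat) a w : occ v (a :: w) = prefix v (a :: w) + occ v w.
Proof.
rewrite prefixE {1}/occ [in LHS]/= -[iota 1 _]/(iota (1 + 0) _) iotaDl count_map.
congr (_ + _).
have [le_vw|lt_wv] := leqP (size v) (size w); first by rewrite subSn.
rewrite (eqP lt_wv) /occ (eqP (ltnW lt_wv)) /= addn0 drop0 take_oversize ?(ltnW lt_wv) //.
by case: eqP lt_wv => // ->; rewrite ltnn.
Qed.

Lemma occ_gt0 (v w : seq nat) : (0 < occ v w) = infix v w.
Proof.
elim: w => [|a w IHw]; first by rewrite occ_nil infixs0 lt0b.
by rewrite occ_cons infix_consl addn_gt0 lt0b IHw.
Qed.

Lemma leq_occ_catl (v s w : seq nat) : occ v w <= occ v (s ++ w).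
Proof.
elim: s => [|a s IHs] //=.
by rewrite occ_cons (leq_trans IHs) ?leq_addl.
Qed.

Lemma ltn_occ_cat_self (v w : seq nat) : 0 < size v -> occ v w < occ v (v ++ w).
Proof.
case: v => [|a v] // _.
by rewrite cat_cons occ_cons -cat_cons prefix_prefix add1n ltnS leq_occ_catl.
Qed.

Lemma occ_sandwich_gt2 (v m : seq nat) :
  0 < size v -> infix v m -> 2 < occ v (v ++ m ++ v).
Proof.
move=> v_gt0 /infixP[p [s ->]]; rewrite -!catA.
apply: leq_trans _ (ltn_occ_cat_self _ v_gt0); rewrite ltnS.
apply: leq_trans _ (leq_occ_catl _ p _).
apply: leq_trans _ (ltn_occ_cat_self _ v_gt0); rewrite ltnS.
apply: leq_trans _ (leq_occ_catl _ s _).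
by rewrite occ_gt0 infix_refl.
Qed.

Definition middle {T : Type} (t : nat) (s : seq T) := take (size s - 2 * t) (drop t s).

Section SeqFacts.
Variable T : eqType.
Implicit Types (s u w : seq T).

Lemma prefix_map (T' : eqType) (f : T -> T') s1 s2 :
  injective f -> prefix (map f s1) (map f s2) = prefix s1 s2.
Proof. by move=> inj_f; rewrite !prefixE size_map -map_take (inj_eq (inj_map inj_f)). Qed.

Lemma infix_map (T' : eqType) (f : T -> T') s1 s2 :
  injective f -> infix (map f s1) (map f s2) = infix s1 s2.
Proof.
move=> inj_f; elim: s2 => [|a s2 IHs2]; first by rewrite !infixs0; case: s1.
by rewrite !infix_consl -map_cons prefix_map // IHs2.
Qed.

Lemma nseq_cat_cons (x : T) n s : nseq n x ++ x :: s = nseq n.+1 x ++ s.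
Proof. by elim: n => //= n ->. Qed.

Lemma prefix_nseq_cat_cons (z b : T) r t s :
  b != z -> r < t -> prefix (nseq t z) (nseq r z ++ b :: s) = false.
Proof.
move=> bz; elim: r t => [|r IHr] [|t] //=; first by rewrite eq_sym (negbTE bz).
by rewrite eqxx ltnS => /IHr.
Qed.

Lemma infix_nseq_cat_cons (z b : T) r t s :
  b != z -> r < t -> infix (nseq t z) (nseq r z ++ b :: s) = infix (nseq t z) s.
Proof.
move=> bz; elim: r => [|r IHr] lt_rt.
  by rewrite infix_consl (prefix_nseq_cat_cons (r := 0)).
by rewrite infix_consl (prefix_nseq_cat_cons (r := r.+1)) // IHr // ltnW.
Qed.

Lemma size_middle t s : size (middle t s) = size s - 2 * t.
Proof. by rewrite size_takel // size_drop leq_sub2l // leq_pmull. Qed.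

Lemma map_middle (T' : eqType) (f : T -> T') t s : map f (middle t s) = middle t (map f s).
Proof. by rewrite /middle map_take map_drop size_map. Qed.

Lemma border_split u s : 2 * size u <= size s ->
  take (size u) s = u -> drop (size s - size u) s = u -> s = u ++ middle (size u) s ++ u.
Proof.
move=> le_2u_s pre_u suf_u.
rewrite -{1}(cat_take_drop (size u) s) pre_u; congr (u ++ _).
rewrite -(cat_take_drop (size s - 2 * size u) (drop (size u) s)) drop_drop.
congr (_ ++ _); rewrite -[in RHS]suf_u; congr drop; lia.
Qed.
End SeqFacts.

Lemma closed_by_split (u w : seq nat) : 2 * size u <= size w -> closed_by u w ->
  w = u ++ middle (size u) w ++ u /\ ~~ infix u (middle (size u) w).
Proof.
move=> le_2u_w /andP[/and4P[u_gt0 _ /eqP pre_u /eqP suf_u] /eqP occ2].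
have w_split := border_split le_2u_w pre_u suf_u.
split=> //; apply/negP => /(occ_sandwich_gt2 u_gt0).
by rewrite -w_split occ2.
Qed.

Lemma tperm_eqR (T : finType) (x y a : T) : (tperm x y a == y) = (a == x).
Proof. by rewrite -[X in _ == X](tpermL x y) (inj_eq perm_inj). Qed.

Section MatchCode.
Variables (T : finType) (z : T) (u : seq T).

Fixpoint match_code (r : nat) (x : seq T) : seq T :=
  if x is a :: x' then
    let c := nth z u r in tperm c z a :: match_code (if a == c then r.+1 else 0) x'
  else [::].

Lemma size_match_code r x : size (match_code r x) = size x.
Proof. by elim: x r => //= a x IHx r; rewrite IHx. Qed.

Lemma match_code_inj r : injective (match_code r).
Proof.
move=> x1 x2; elim: x1 r x2 => [|a x1 IHx1] r [|b x2] //= [/perm_inj <-].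
by move/IHx1 ->.
Qed.

Lemma match_code_blank_run r x : r <= size u ->
  infix (nseq (size u) z) (nseq r z ++ match_code r x) -> infix u (take r u ++ x).
Proof.
elim: x r => [|a x IHx] r; rewrite leq_eqVlt => /orP[/eqP-> _|lt_ru].
- by rewrite take_size cats0 infix_refl.
- by rewrite !cats0 => /size_infix; rewrite !size_nseq leqNgt lt_ru.
- by rewrite take_size prefix_infix.
rewrite /=; case: eqVneq => [->|a_neq].
  rewrite tpermL nseq_cat_cons => /(IHx _ lt_ru).
  by rewrite (take_nth z lt_ru) cat_rcons.
rewrite infix_nseq_cat_cons ?tperm_eqR // => /(IHx _ (leq0n _)).
by rewrite take0 => /(infix_catl (take r u ++ [:: a])); rewrite -catA.
Qed.

Lemma match_code_blank_free x : infix (nseq (size u) z) (match_code 0 x) -> infix u x.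
Proof. by move/(match_code_blank_run (leq0n _)); rewrite take0. Qed.
End MatchCode.

Section ClosedWords.
Variables (k n t : nat).
Hypotheses (k_gt0 : 0 < k) (le_2t_n : 2 * t <= n).

Let z : 'I_k := Ordinal k_gt0.

Let le_t_n : t <= n := leq_trans (leq_pmull t (isT : 0 < 2)) le_2t_n.

Definition closed_words : {set n.-tuple 'I_k} :=
  [set w : n.-tuple 'I_k | [exists u : t.-tuple 'I_k, closed_by (map val u) (map val w)]].

Definition border_word (w : n.-tuple 'I_k) : t.-tuple 'I_k :=
  tcast (minn_idPl le_t_n) [tuple of take t w].

Lemma code_tupleP (w : n.-tuple 'I_k) :
  size (match_code z (border_word w) 0 (middle t w)) == n - 2 * t.
Proof. by rewrite size_match_code size_middle size_tuple. Qed.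

Definition code (w : n.-tuple 'I_k) := (border_word w, Tuple (code_tupleP w)).

Lemma closed_wordP (w : n.-tuple 'I_k) : w \in closed_words ->
  w = border_word w ++ middle t w ++ border_word w :> seq 'I_k /\
  ~~ infix (border_word w) (middle t w).
Proof.
rewrite inE => /existsP[u].
have le_2u_w : 2 * size (map val u) <= size (map val w) by rewrite !size_map !size_tuple.
case/(closed_by_split le_2u_w); rewrite size_map size_tuple -map_middle -!map_cat.
rewrite infix_map; last exact: val_inj.
move=> /(inj_map val_inj) w_split u_free.
suff -> : border_word w = u :> seq 'I_k by [].
by rewrite val_tcast /= w_split take_size_cat ?size_tuple.
Qed.

Lemma code_inj : {in closed_words &, injective code}.
Proof.
move=> w1 w2 /closed_wordP[w1_split _] /closed_wordP[w2_split _] [eq_b].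
rewrite eq_b => /match_code_inj eq_m.
by apply: val_inj; rewrite /= w1_split w2_split eq_b eq_m.
Qed.

Lemma code_closed_word w : w \in closed_words ->
  code w \in setX [set: t.-tuple 'I_k]
                  [set m : (n - 2 * t).-tuple 'I_k | occ (nseq t 0) (map val m) == 0].
Proof.
move=> /closed_wordP[_ free]; rewrite !inE /= -[0]/(val z) -map_nseq eqn0Ngt occ_gt0.
rewrite infix_map; last exact: val_inj.
apply: contra free; rewrite -[in nseq t z](size_tuple (border_word w)).
exact: match_code_blank_free.
Qed.

Lemma card_closed_words : Ck k n t <= k ^ t * Ak k (n - 2 * t) (nseq t 0).
Proof.
rewrite -[Ck k n t]/#|closed_words| -(card_in_imset code_inj).
rewrite -[k in k ^ t]card_ord -card_tuple -cardsT -cardsX.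
apply/subset_leq_card/subsetP => _ /imsetP[w /code_closed_word ? ->] //.
Qed.
End ClosedWords.

Theorem lemma7 (n t k : nat) :
  1 <= t -> 2 * t <= n -> 2 <= k ->
  Ck k n t <= k ^ t * Ak k (n - 2 * t) (nseq t 0).
Proof.
move=> _ le_2t_n lt_1k.
exact: card_closed_words (ltnW lt_1k) le_2t_n.
Qed.
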